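(* Let $\varphi:\Lambda\to\Gamma$ be a regular covering map of finite simplicial graphs without isolated vertices, and let $v,v'$ be vertices of $\Gamma$ with $\mathrm{lk}(v)\subseteq\mathrm{st}(v')$. Then the transvection $T^{v'}_v$ of $A_\Gamma$ sending $v$ to $vv'$ and fixing all other vertices is liftable if and only if $v\lesssim_\varphi v'$.
   Context: Graphs are finite simplicial graphs; subgraphs are induced. $A_\Gamma$ is the right-angled Artin group with generators $V\Gamma$ and relations $[u,w]=1$ for edges $\{u,w\}$. $\mathrm{lk}(v)$ is induced by the neighbours of $v$, $\mathrm{st}(v)$ by $\mathrm{lk}(v)\cup\{v\}$. A covering map $\varphi:\Lambda\to\Gamma$ is a surjective simplicial map mapping the neighbours of each vertex $u$ bijectively onto the neighbours of $\varphi(u)$; regular means the group $\mathrm{Deck}(\varphi)$ of graph automorphisms $\mu$ of $\Lambda$ with $\varphi\mu=\varphi$ acts transitively on each fiber. $\phi:A_\Lambda\to A_\Gamma$ is induced by $\varphi$; $f\in\mathrm{Aut}(A_\Gamma)$ is liftable if there is $F\in\mathrm{Aut}(A_\Lambda)$ with $f\circ\phi=\phi\circ F$. For vertices $x,y$ of $\Gamma$, $x\lesssim_\varphi y$ means: for every $u\in\varphi^{-1}(x)$ there is $u'\in\varphi^{-1}(y)$ with $\mathrm{lk}(u)\subseteq\mathrm{st}(u')$. *)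

From mathcomp Require Import all_boot.
Set Implicit Arguments. Unset Strict Implicit. Unset Printing Implicit Defensive.

Definition simple_graph (V : finType) (e : rel V) : Prop :=
  symmetric e /\ irreflexive e.

Definition no_isolated (V : finType) (e : rel V) : Prop :=
  forall x : V, exists y, e x y.

Definition lk_sub_st (V : finType) (e : rel V) (x y : V) : Prop :=
  forall w, e x w -> w = y \/ e y w.

Definition covering_map (VL VG : finType) (eL : rel VL) (eG : rel VG)
    (phi : VL -> VG) : Prop :=
  [/\ forall x : VG, exists u, phi u = x,
      forall u w, eL u w -> eG (phi u) (phi w),
      forall u w1 w2, eL u w1 -> eL u w2 -> phi w1 = phi w2 -> w1 = w2 &
      forall u x, eG (phi u) x -> exists2 w, eL u w & phi w = x].

Definition graph_aut (V : finType) (e : rel V) (mu : V -> V) : Prop :=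
  bijective mu /\ forall x y, e (mu x) (mu y) = e x y.

Definition regular_covering (VL VG : finType) (eL : rel VL) (eG : rel VG)
    (phi : VL -> VG) : Prop :=
  covering_map eL eG phi /\
  forall u u', phi u = phi u' ->
    exists mu, [/\ graph_aut eL mu, forall w, phi (mu w) = phi w & mu u = u'].

Definition lesssim (VL VG : finType) (eL : rel VL) (phi : VL -> VG)
    (x y : VG) : Prop :=
  forall u, phi u = x -> exists u', phi u' = y /\ lk_sub_st eL u u'.

(** Words in the generators of A_Γ: a letter (x, b) stands for x if b = false
    and for x^-1 if b = true. *)
Definition word (V : Type) := seq (V * bool).

Definition inv_word (V : Type) (s : word V) : word V :=
  rev (map (fun p => (p.1, ~~ p.2)) s).

(** The defining congruence of A_Γ = <V | [u,w] = 1 for edges {u,w}>. *)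
Inductive raag_eq (V : finType) (e : rel V) : word V -> word V -> Prop :=
  | raag_refl w : raag_eq e w w
  | raag_sym w w' : raag_eq e w w' -> raag_eq e w' w
  | raag_trans w1 w2 w3 : raag_eq e w1 w2 -> raag_eq e w2 w3 -> raag_eq e w1 w3
  | raag_cancel (l r : word V) (x : V) (b : bool) :
      raag_eq e (l ++ [:: (x, b); (x, ~~ b)] ++ r) (l ++ r)
  | raag_comm (l r : word V) (x y : V) (b c : bool) : e x y ->
      raag_eq e (l ++ [:: (x, b); (y, c)] ++ r) (l ++ [:: (y, c); (x, b)] ++ r).

Definition subst (V W : Type) (f : V -> word W) (w : word V) : word W :=
  flatten (map (fun p => if p.2 then inv_word (f p.1) else f p.1) w).

Definition raag_hom (V W : finType) (e : rel V) (e' : rel W)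
    (f : V -> word W) : Prop :=
  forall w w', raag_eq e w w' -> raag_eq e' (subst f w) (subst f w').

Definition raag_aut (V : finType) (e : rel V) (f : V -> word V) : Prop :=
  [/\ raag_hom e e f,
      forall w w', raag_eq e (subst f w) (subst f w') -> raag_eq e w w' &
      forall w, exists w', raag_eq e (subst f w') w].

Definition induced_hom (VL VG : Type) (phi : VL -> VG) : VL -> word VG :=
  fun u => [:: (phi u, false)].

(** f ∈ Aut(A_Γ) is liftable: ∃ F ∈ Aut(A_Λ), f ∘ φ = φ ∘ F. *)
Definition liftable (VL VG : finType) (eL : rel VL) (eG : rel VG)
    (phi : VL -> VG) (f : VG -> word VG) : Prop :=
  exists F : VL -> word VL, raag_aut eL F /\
    forall w : word VL,
      raag_eq eG (subst f (subst (induced_hom phi) w))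
                 (subst (induced_hom phi) (subst F w)).

Definition transvection (V : finType) (v v' : V) : V -> word V :=
  fun x => if x == v then [:: (v, false); (v', false)] else [:: (x, false)].

From mathcomp Require Import all_boot all_algebra.
From mathcomp Require Import ring.

Set Implicit Arguments. Unset Strict Implicit. Unset Printing Implicit Defensive.
Import GRing.Theory Num.Theory.

(* If [v ≲ v'], pick for every [u] over [v] a vertex [pr u] over [v'] with
   lk(u) ⊆ st(pr u); the automorphism [u ↦ u (pr u)] of A_Λ (fixing the other
   vertices) lifts the transvection.

   Conversely let [F] lift the transvection and let [u] lie over [v]. Counting
   exponents fibrewise, [F u] involves some [y] over [v] and some [z] over [v'].
   For [x] in st(u), [F u] and [F x] commute, and mapping A_Λ onto a Heisenberg
   group (killing all generators but two non-adjacent ones [c], [d]) shows that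
   their exponent-sum rows have vanishing [c,d]-minor. If some [a ∈ lk(y)] lay
   outside st(z), these minors would force every combination of the rows over
   st(u) that vanishes on st(y) \ {a} to vanish identically; as the
   exponent-sum matrix of an automorphism is invertible, this would embed
   |st(u)| independent vectors in a space of dimension |st(y)| - 1 = |st(u)| - 1.
   So lk(y) ⊆ st(z), and a deck transformation taking [y] to [u] moves this
   inclusion to [u]. *)

Section InvWord.
Variable V : Type.
Implicit Types (s t : word V) (p : V * bool).

Lemma inv_word_cons p s : inv_word (p :: s) = inv_word s ++ [:: (p.1, ~~ p.2)].
Proof. by rewrite /inv_word /= rev_cons cats1. Qed.

Lemma inv_word_cat s t : inv_word (s ++ t) = inv_word t ++ inv_word s.
Proof. by rewrite /inv_word map_cat rev_cat. Qed.

Lemma inv_wordK : involutive (@inv_word V).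
Proof.
move=> s; rewrite /inv_word map_rev revK -map_comp -[RHS]map_id.
by apply: eq_map => -[x b] /=; rewrite negbK.
Qed.

End InvWord.

Definition subst_letter (V W : Type) (f : V -> word W) (p : V * bool) : word W :=
  if p.2 then inv_word (f p.1) else f p.1.

Section Subst.
Variables V W : Type.
Implicit Types (f : V -> word W) (s t : word V).

Lemma subst_nil f : subst f [::] = [::].
Proof. by []. Qed.

Lemma subst_cons f p s : subst f (p :: s) = subst_letter f p ++ subst f s.
Proof. by []. Qed.

Lemma subst_cat f s t : subst f (s ++ t) = subst f s ++ subst f t.
Proof. by rewrite /subst map_cat flatten_cat. Qed.

Lemma subst_seq1 f p : subst f [:: p] = subst_letter f p.
Proof. exact: cats0. Qed.

Lemma subst1 f x : subst f [:: (x, false)] = f x.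
Proof. exact: cats0. Qed.

Lemma subst_letterN f p : subst_letter f (p.1, ~~ p.2) = inv_word (subst_letter f p).
Proof. by case: p => x [] //=; rewrite /subst_letter /= inv_wordK. Qed.

Lemma subst_inv f s : subst f (inv_word s) = inv_word (subst f s).
Proof.
elim: s => [|p s IH] //.
by rewrite inv_word_cons subst_cat IH subst_seq1 subst_cons inv_word_cat subst_letterN.
Qed.

Lemma eq_subst f g : f =1 g -> subst f =1 subst g.
Proof.
by move=> fg s; elim: s => [|[x b] s IH] //; rewrite !subst_cons IH /subst_letter /= fg.
Qed.

End Subst.

Lemma subst_comp (V W X : Type) (f : W -> word X) (g : V -> word W) s :
  subst f (subst g s) = subst (fun x => subst f (g x)) s.
Proof.
elim: s => [|[x b] s IH] //.
by rewrite !subst_cons subst_cat IH; case: b; rewrite /subst_letter /= ?subst_inv.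
Qed.

Section RaagEq.
Variables (V : finType) (e : rel V).
Local Notation req := (raag_eq e).
Implicit Types (s t w : word V).

Lemma raag_eq_ctx l r w w' : req w w' -> req (l ++ w ++ r) (l ++ w' ++ r).
Proof.
elim=> [w0|w1 w2 _ IH|w1 w2 w3 _ IH1 _ IH2|l0 r0 x b|l0 r0 x y b c exy].
- exact: raag_refl.
- exact: raag_sym.
- exact: raag_trans IH2.
- by have := raag_cancel e (l ++ l0) (r0 ++ r) x b; rewrite -!catA.
- by have := raag_comm (l ++ l0) (r0 ++ r) b c exy; rewrite -!catA.
Qed.

Lemma raag_eq_catl l w w' : req w w' -> req (l ++ w) (l ++ w').
Proof. by move=> h; have := raag_eq_ctx l [::] h; rewrite !cats0. Qed.

Lemma raag_eq_catr r w w' : req w w' -> req (w ++ r) (w' ++ r).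
Proof. exact: (raag_eq_ctx [::] r). Qed.

Lemma raag_eq_cat s s' t t' : req s s' -> req t t' -> req (s ++ t) (s' ++ t').
Proof. by move=> hs ht; apply: raag_trans (raag_eq_catr _ hs) (raag_eq_catl _ ht). Qed.

Lemma raag_eq_mulV s : req (s ++ inv_word s) [::].
Proof.
elim: s => [|[x b] s IH] /=; first exact: raag_refl.
rewrite inv_word_cons /=.
apply: raag_trans (raag_cancel e [::] [::] x b).
by have := raag_eq_ctx [:: (x, b)] [:: (x, ~~ b)] IH; rewrite /= -catA.
Qed.

Lemma raag_eq_Vmul s : req (inv_word s ++ s) [::].
Proof. by have := raag_eq_mulV (inv_word s); rewrite inv_wordK. Qed.

Lemma raag_eq_inv w w' : req w w' -> req (inv_word w) (inv_word w').
Proof.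
elim=> [w0|w1 w2 _ IH|w1 w2 w3 _ IH1 _ IH2|l r x b|l r x y b c exy].
- exact: raag_refl.
- exact: raag_sym.
- exact: raag_trans IH2.
- rewrite !inv_word_cat.
  have -> : inv_word [:: (x, b); (x, ~~ b)] = [:: (x, b); (x, ~~ b)].
    by rewrite /inv_word /= negbK.
  by rewrite -catA; apply: raag_cancel.
- rewrite !inv_word_cat.
  have -> : inv_word [:: (x, b); (y, c)] = [:: (y, ~~ c); (x, ~~ b)] by [].
  have -> : inv_word [:: (y, c); (x, b)] = [:: (x, ~~ b); (y, ~~ c)] by [].
  by rewrite -!catA; apply: raag_sym; apply: raag_comm.
Qed.

Lemma raag_commute_invl s t :
  req (s ++ t) (t ++ s) -> req (inv_word s ++ t) (t ++ inv_word s).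
Proof.
move=> st.
have sV : req (inv_word s ++ (t ++ s) ++ inv_word s) (inv_word s ++ t).
  by have := raag_eq_ctx (inv_word s ++ t) [::] (raag_eq_mulV s); rewrite !catA !cats0.
have Vs : req (inv_word s ++ (s ++ t) ++ inv_word s) (t ++ inv_word s).
  by have := raag_eq_catr (t ++ inv_word s) (raag_eq_Vmul s); rewrite !catA.
exact: raag_trans (raag_sym sV) (raag_trans (raag_eq_ctx _ _ (raag_sym st)) Vs).
Qed.

Lemma raag_commute_subst_letter (W : Type) (f : W -> word V) x y b c :
  req (f x ++ f y) (f y ++ f x) ->
  req (subst_letter f (x, b) ++ subst_letter f (y, c))
      (subst_letter f (y, c) ++ subst_letter f (x, b)).
Proof.
rewrite /subst_letter /= => fxy.
have fx'y : req ((if b then inv_word (f x) else f x) ++ f y)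
                (f y ++ if b then inv_word (f x) else f x).
  by case: b; first exact: raag_commute_invl.
case: c => //; apply: raag_sym; apply: raag_commute_invl; exact: raag_sym.
Qed.

Lemma raag_commute_letters x y b c : y = x \/ e x y ->
  req [:: (x, b); (y, c)] [:: (y, c); (x, b)].
Proof.
case=> [->|exy]; last exact: (raag_comm [::] [::] b c exy).
case: b; case: c; try exact: raag_refl.
- apply: raag_trans (raag_cancel e [::] [::] x true) _.
  exact: raag_sym (raag_cancel e [::] [::] x false).
- apply: raag_trans (raag_cancel e [::] [::] x false) _.
  exact: raag_sym (raag_cancel e [::] [::] x true).
Qed.

Lemma subst_raag_eq_id (h : V -> word V) w :
  (forall x, req (h x) [:: (x, false)]) -> req (subst h w) w.
Proof.
move=> hx; elim: w => [|[x b] w IH]; first exact: raag_refl.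
rewrite subst_cons -cat1s; apply: raag_eq_cat IH.
by case: b; rewrite /subst_letter /=; [exact: (raag_eq_inv (hx x))|].
Qed.

End RaagEq.

Lemma raag_hom_of_edges (V W : finType) (e : rel V) (e' : rel W) (f : V -> word W) :
  (forall x y, e x y -> raag_eq e' (f x ++ f y) (f y ++ f x)) -> raag_hom e e' f.
Proof.
move=> fe w w'.
elim=> [w0|w1 w2 _ IH|w1 w2 w3 _ IH1 _ IH2|l r x b|l r x y b c exy].
- exact: raag_refl.
- exact: raag_sym.
- exact: raag_trans IH2.
- rewrite !subst_cat !subst_cons subst_nil cats0.
  rewrite -[(x, ~~ b)]/((x, b).1, ~~ (x, b).2) subst_letterN.
  exact: raag_eq_ctx (raag_eq_mulV e' _).
- rewrite !subst_cat !subst_cons subst_nil !cats0 !catA; apply: raag_eq_catr.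
  rewrite -!catA; apply: raag_eq_catl.
  exact: raag_commute_subst_letter (fe _ _ exy).
Qed.

Lemma raag_aut_of_inverse (V : finType) (e : rel V) (f g : V -> word V) :
  raag_hom e e f -> raag_hom e e g ->
  (forall x, raag_eq e (subst f (g x)) [:: (x, false)]) ->
  (forall x, raag_eq e (subst g (f x)) [:: (x, false)]) ->
  raag_aut e f.
Proof.
move=> fhom ghom fg gf; split=> // [w w' fww'|w].
- have := ghom _ _ fww'; rewrite !subst_comp => gfww'.
  exact: raag_trans (raag_sym (subst_raag_eq_id w gf))
                    (raag_trans gfww' (subst_raag_eq_id w' gf)).
- by exists (subst g w); rewrite subst_comp; apply: subst_raag_eq_id.
Qed.

Local Open Scope ring_scope.

Definition exp_sum (V : eqType) (w : word V) (x : V) : rat :=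
  \sum_(p <- w) (p.1 == x)%:R * (-1) ^+ p.2.

Section ExpSum.
Variable V : eqType.
Implicit Types (s t w : word V) (x y : V).

Lemma exp_sum_cons p w x : exp_sum (p :: w) x = (p.1 == x)%:R * (-1) ^+ p.2 + exp_sum w x.
Proof. exact: big_cons. Qed.

Lemma exp_sum_cat s t x : exp_sum (s ++ t) x = exp_sum s x + exp_sum t x.
Proof. exact: big_cat. Qed.

Lemma exp_sum1 y x : exp_sum [:: (y, false)] x = (y == x)%:R.
Proof. by rewrite /exp_sum big_seq1 mulr1. Qed.

Lemma exp_sum_inv s x : exp_sum (inv_word s) x = - exp_sum s x.
Proof.
rewrite /exp_sum big_rev big_map -sumrN; apply: eq_bigr => p _.
by rewrite signrN mulrN.
Qed.

End ExpSum.

Lemma exp_sum_raag_eq (V : finType) (e : rel V) (w w' : word V) :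
  raag_eq e w w' -> forall x, exp_sum w x = exp_sum w' x.
Proof.
elim=> [w0|w1 w2 _ IH|w1 w2 w3 _ IH1 _ IH2|l r y b|l r y z b c eyz] x.
- by [].
- by rewrite IH.
- by rewrite IH1 IH2.
- rewrite exp_sum_cat [RHS]exp_sum_cat; congr (_ + _).
  by rewrite /= !exp_sum_cons /= signrN mulrN addNKr.
- rewrite exp_sum_cat [RHS]exp_sum_cat; congr (_ + _).
  by rewrite /= !exp_sum_cons addrCA.
Qed.

Lemma exp_sum_subst_letter (V W : finType) (f : W -> word V) p x :
  exp_sum (subst_letter f p) x = (-1) ^+ p.2 * exp_sum (f p.1) x.
Proof. by case: p => y [] /=; rewrite /subst_letter /= ?exp_sum_inv ?mulN1r ?mul1r. Qed.

Lemma exp_sum_subst (V W : finType) (f : W -> word V) (w : word W) x :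
  exp_sum (subst f w) x = \sum_z exp_sum w z * exp_sum (f z) x.
Proof.
elim: w => [|[y b] w IH].
  by rewrite /exp_sum big_nil big1 // => z _; rewrite big_nil mul0r.
rewrite subst_cons exp_sum_cat IH exp_sum_subst_letter.
under [RHS]eq_bigr => z _ do rewrite exp_sum_cons mulrDl.
rewrite big_split /=; congr (_ + _).
rewrite (bigD1 y) //= eqxx mul1r big1 ?addr0 // => z /negbTE zy.
by rewrite eq_sym zy !mul0r.
Qed.

Lemma exp_sum_induced (V W : finType) (phi : W -> V) (w : word W) (x : V) :
  exp_sum (subst (induced_hom phi) w) x = \sum_(y | phi y == x) exp_sum w y.
Proof.
rewrite exp_sum_subst [RHS]big_mkcond /=; apply: eq_bigr => y _.
by rewrite /induced_hom exp_sum1; case: (phi y == x); rewrite ?mulr1 ?mulr0.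
Qed.

(* [(a, b, t)] stands for the unitriangular matrix [[1, a, t], [0, 1, b], [0, 0, 1]]. *)
Definition heis_mul (g h : rat * rat * rat) : rat * rat * rat :=
  (g.1.1 + h.1.1, g.1.2 + h.1.2, g.2 + h.2 + g.1.1 * h.1.2).

Lemma heis_mulA : associative heis_mul.
Proof.
by move=> [[a1 b1] t1] [[a2 b2] t2] [[a3 b3] t3]; congr (_, _, _); rewrite /=; ring.
Qed.

Lemma heis_mul1g : left_id (0, 0, 0) heis_mul.
Proof. by move=> [[a b] t]; congr (_, _, _); rewrite /=; ring. Qed.

Lemma heis_mulg1 : right_id (0, 0, 0) heis_mul.
Proof. by move=> [[a b] t]; congr (_, _, _); rewrite /=; ring. Qed.

Lemma heis_commute g h :
  heis_mul g h = heis_mul h g <-> g.1.1 * h.1.2 = h.1.1 * g.1.2.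
Proof.
case: g h => [[a1 b1] t1] [[a2 b2] t2]; rewrite /heis_mul /=; split.
- by case=> _ _; rewrite [t2 + t1]addrC => /addrI.
- by move=> E; congr (_, _, _); rewrite ?E; ring.
Qed.

Section Heisenberg.
Variables (V : finType) (e : rel V) (c d : V).
Hypotheses (e_sym : symmetric e) (cd : c != d) (ncd : ~~ e c d).

Definition heis_gen (p : V * bool) : rat * rat * rat :=
  ((p.1 == c)%:R * (-1) ^+ p.2, (p.1 == d)%:R * (-1) ^+ p.2, 0).

Definition heis_word (w : word V) : rat * rat * rat :=
  foldr (fun p g => heis_mul (heis_gen p) g) (0, 0, 0) w.

Lemma heis_word_cat s t : heis_word (s ++ t) = heis_mul (heis_word s) (heis_word t).
Proof. by elim: s => [|p s IH] /=; rewrite ?heis_mul1g // IH heis_mulA. Qed.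

Lemma heis_word_exp_sum w : (heis_word w).1 = (exp_sum w c, exp_sum w d).
Proof.
elim: w => [|p w IH]; first by rewrite /exp_sum !big_nil.
by rewrite /= IH !exp_sum_cons.
Qed.

Lemma heis_word_raag_eq w w' : raag_eq e w w' -> heis_word w = heis_word w'.
Proof.
have cd0 (x y : V) : e x y -> (x == c)%:R * (y == d)%:R = 0 :> rat.
  move=> exy; case: (eqVneq x c) => [xc|_]; case: (eqVneq y d) => [yd|_];
    rewrite ?mulr0n ?mul0r ?mulr0 //.
  by move: ncd; rewrite -xc -yd exy.
elim=> [w0|w1 w2 _ IH|w1 w2 w3 _ IH1 _ IH2|l r x b|l r x y b b' exy].
- by [].
- by [].
- by rewrite IH1 IH2.
- rewrite !heis_word_cat; congr heis_mul; rewrite -[RHS]heis_mul1g; congr heis_mul.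
  rewrite /= heis_mulg1 /heis_mul /= signrN !mulrN !addrN mulrACA.
  have -> : (x == c)%:R * (x == d)%:R = 0 :> rat.
    by case: (eqVneq x c) => [->|_]; rewrite ?(negbTE cd) ?mulr0n ?mul0r ?mulr0.
  by rewrite mul0r addr0.
- rewrite !heis_word_cat; congr heis_mul; congr heis_mul.
  have eyx : e y x by rewrite e_sym.
  rewrite /= !heis_mulg1; apply/heis_commute => /=.
  by rewrite mulrACA (cd0 _ _ exy) [RHS]mulrACA (cd0 _ _ eyx) !mul0r.
Qed.

Lemma raag_commute_exp_sum_minor p q : raag_eq e (p ++ q) (q ++ p) ->
  exp_sum p c * exp_sum q d = exp_sum p d * exp_sum q c.
Proof.
move=> /heis_word_raag_eq; rewrite !heis_word_cat => /heis_commute.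
by rewrite !heis_word_exp_sum /= [RHS]mulrC.
Qed.

End Heisenberg.

Lemma leq_card_restriction_inj (V : finType) (S1 S2 : {set V}) (m : V -> V -> rat) :
  (forall lam : V -> rat,
     {in S2, forall t, \sum_(x in S1) lam x * m x t = 0} -> {in S1, forall x, lam x = 0}) ->
  (#|S1| <= #|S2|)%N.
Proof.
move=> inj.
pose A : 'M[rat]_(#|S1|, #|S2|) := \matrix_(i, j) m (enum_val i) (enum_val j).
suff /eqP <- : row_free A by exact: rank_leq_col.
apply/inj_row_free => l lA0; apply/rowP => i; rewrite mxE.
have S1i : enum_val i \in S1 := enum_valP i.
pose lam x := l 0 (enum_rank_in S1i x).
have := inj lam _ _ S1i; rewrite /lam enum_valK_in; apply=> t S2t.
transitivity ((l *m A) 0 (enum_rank_in S2t t)); last by rewrite lA0 mxE.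
rewrite mxE big_enum_val.
apply: eq_bigr => j _.
by rewrite enum_valK_in mxE (enum_rankK_in S2t S2t).
Qed.

Lemma raag_aut_exp_sum_row_free (V : finType) (e : rel V) (F : V -> word V)
    (S : {set V}) (lam : V -> rat) :
  raag_aut e F -> (forall t, \sum_(x in S) lam x * exp_sum (F x) t = 0) ->
  {in S, forall x, lam x = 0}.
Proof.
move=> [_ Finj Fsurj] R0 x0 Sx0.
have /fin_all_exists [G FG] : forall x : V, exists w, raag_eq e (subst F w) [:: (x, false)].
  by move=> x; apply: Fsurj.
have GF x : raag_eq e (subst G (F x)) [:: (x, false)].
  by apply: Finj; rewrite subst_comp subst1; apply: subst_raag_eq_id.
have FG_inv x t : \sum_z exp_sum (F x) z * exp_sum (G z) t = (x == t)%:R.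
  by rewrite -exp_sum_subst (exp_sum_raag_eq (GF x)) exp_sum1.
have : \sum_t (\sum_(x in S) lam x * exp_sum (F x) t) * exp_sum (G t) x0 = 0.
  by rewrite big1 // => t _; rewrite R0 mul0r.
under eq_bigr => t _ do rewrite mulr_suml.
rewrite exchange_big /=.
under eq_bigr => x _ do rewrite -(eq_bigr _ (fun t _ => mulrA _ _ _)) -mulr_sumr FG_inv.
rewrite (bigD1 x0) //= eqxx mulr1 big1 ?addr0 // => x /andP[_ /negbTE ->].
by rewrite mulr0.
Qed.

Lemma raag_hom_exp_sum_minor (V W : finType) (e : rel V) (e' : rel W) (F : V -> word W)
    x y c d :
  symmetric e' -> raag_hom e e' F -> e x y -> c != d -> ~~ e' c d ->
  exp_sum (F x) c * exp_sum (F y) d = exp_sum (F x) d * exp_sum (F y) c.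
Proof.
move=> e_sym Fhom exy cd ncd; apply: (raag_commute_exp_sum_minor e_sym cd ncd).
by have := Fhom _ _ (raag_comm [::] [::] false false exy); rewrite /subst /= !cats0.
Qed.

Definition star (V : finType) (e : rel V) (x : V) : {set V} := x |: [set y | e x y].

Lemma raag_hom_star_minor (V : finType) (e : rel V) (F : V -> word V) u
    (S : {set V}) (lam : V -> rat) c d :
  symmetric e -> raag_hom e e F -> {subset S <= star e u} -> c != d -> ~~ e c d ->
  exp_sum (F u) c * (\sum_(x in S) lam x * exp_sum (F x) d) =
  exp_sum (F u) d * (\sum_(x in S) lam x * exp_sum (F x) c).
Proof.
move=> e_sym Fhom Su cd ncd; rewrite !mulr_sumr; apply: eq_bigr => x /Su.
case/setU1P => [->|]; first by ring.
rewrite inE => ux.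
by rewrite mulrCA [RHS]mulrCA (raag_hom_exp_sum_minor e_sym Fhom ux cd ncd).
Qed.

Lemma vanish_of_minors (V : finType) (e : rel V) (r R : V -> rat) y z a :
  (forall c d, c != d -> ~~ e c d -> r c * R d = r d * R c) ->
  r y != 0 -> r z != 0 -> y != a -> z != a -> ~~ e z a ->
  {in star e y :\ a, forall t, R t = 0} -> forall t, R t = 0.
Proof.
move=> minor ry rz ya za nza R0.
have Ry : R y = 0 by apply: R0; rewrite /star !inE ya eqxx.
have R_ne_a t : t != a -> R t = 0.
  move=> ta; have [yt|] := boolP (t \in star e y); first by apply: R0; rewrite in_setD1 ta.
  rewrite /star !inE negb_or eq_sym => /andP[yt nyt].
  have /eqP := minor y t yt nyt.
  by rewrite Ry mulr0 mulf_eq0 (negbTE ry) => /eqP.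
move=> t; have [->|] := eqVneq t a; last exact: R_ne_a.
have /eqP := minor z a za nza.
by rewrite (R_ne_a z za) mulr0 mulf_eq0 (negbTE rz) => /eqP.
Qed.

Lemma raag_aut_lk_sub_st (V : finType) (e : rel V) (F : V -> word V) u y z :
  simple_graph e -> raag_aut e F -> (#|star e y| <= #|star e u|)%N ->
  exp_sum (F u) y != 0 -> exp_sum (F u) z != 0 -> lk_sub_st e y z.
Proof.
move=> [e_sym e_irr] autF le_yu Fy Fz a ya.
have [->|/negbTE za] := eqVneq a z; [by left | right].
apply/negPn/negP => nza.
have [Fhom _ _] := autF.
have ay : y != a by apply: contraTneq ya => ->; rewrite e_irr.
have a_star : a \in star e y by rewrite /star !inE ya orbT.
suff : (#|star e u| <= #|star e y :\ a|)%N.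
  by move/(leq_trans le_yu); rewrite (cardsD1 a (star e y)) a_star add1n ltnn.
apply: (leq_card_restriction_inj (m := fun x => exp_sum (F x))) => lam vanish.
apply: (raag_aut_exp_sum_row_free autF) => t.
apply: (vanish_of_minors (r := exp_sum (F u))
          (R := fun t => \sum_(x in star e u) lam x * exp_sum (F x) t)
          _ Fy Fz ay _ nza vanish) => [c d cd ncd|]; last by rewrite eq_sym za.
exact: raag_hom_star_minor.
Qed.

Lemma card_star_covering (VL VG : finType) (eL : rel VL) (eG : rel VG)
    (phi : VL -> VG) x :
  covering_map eL eG phi -> irreflexive eL ->
  #|star eL x| = #|[set g | eG (phi x) g]|.+1.
Proof.
move=> [_ phi_e phi_inj phi_lift] eL_irr.
have -> : [set g | eG (phi x) g] = phi @: [set w | eL x w].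
  apply/setP => g; rewrite inE; apply/idP/imsetP => [/phi_lift [w xw <-]|[w]].
    by exists w; rewrite ?inE.
  by rewrite inE => /phi_e xw ->.
rewrite card_in_imset => [|w1 w2]; last by rewrite !inE; exact: phi_inj.
by rewrite /star cardsU1 inE eL_irr.
Qed.

Lemma graph_aut_lk_sub_st (V : finType) (e : rel V) (mu : V -> V) y z :
  graph_aut e mu -> lk_sub_st e y z -> lk_sub_st e (mu y) (mu z).
Proof.
move=> [[g muK gK] mu_e] yz w; rewrite -(gK w) !mu_e => /yz [->|]; by [left | right].
Qed.

Lemma transvection_lift_exp_sum (VL VG : finType) (eG : rel VG) (phi : VL -> VG) v v'
    (F : VL -> word VL) u x :
  (forall w, raag_eq eG (subst (transvection v v') (subst (induced_hom phi) w))
                        (subst (induced_hom phi) (subst F w))) ->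
  phi u = v -> \sum_(y | phi y == x) exp_sum (F u) y = ((v == x) + (v' == x))%:R.
Proof.
move=> liftF pu; rewrite -exp_sum_induced -(subst1 F u) -(exp_sum_raag_eq (liftF _)).
rewrite !subst1 /induced_hom pu /transvection eqxx.
by rewrite /exp_sum !big_cons big_nil !mulr1 addr0 natrD.
Qed.

Lemma lesssim_of_liftable_transvection (VL VG : finType) (eL : rel VL) (eG : rel VG)
    (phi : VL -> VG) v v' :
  simple_graph eL -> regular_covering eL eG phi ->
  liftable eL eG phi (transvection v v') -> lesssim eL phi v v'.
Proof.
move=> sL [cov deck] [F [autF liftF]] u pu.
have fiber_nz x : (v == x) || (v' == x) -> exists2 y, phi y = x & exp_sum (F u) y != 0.
  move=> vx; have : \sum_(y | phi y == x) exp_sum (F u) y != 0.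
    rewrite (transvection_lift_exp_sum x liftF pu) pnatr_eq0 addn_eq0 negb_and.
    by case/orP: vx => ->; rewrite ?orbT.
  case: (pickP (fun y => (phi y == x) && (exp_sum (F u) y != 0))) => [y /andP[/eqP]|none].
    by exists y.
  by rewrite big1 ?eqxx // => y py; have := none y; rewrite py => /negbFE/eqP.
have [y py Fy] : exists2 y, phi y = v & exp_sum (F u) y != 0.
  by apply: fiber_nz; rewrite eqxx.
have [z pz Fz] : exists2 z, phi z = v' & exp_sum (F u) z != 0.
  by apply: fiber_nz; rewrite eqxx orbT.
have [mu [mu_aut mu_phi muy]] := deck y u (etrans py (esym pu)).
exists (mu z); split; first by rewrite mu_phi.
rewrite -muy; apply: graph_aut_lk_sub_st mu_aut _.
apply: (raag_aut_lk_sub_st sL autF _ Fy Fz).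
by rewrite !(card_star_covering _ cov (proj2 sL)) py pu.
Qed.

Section FiberTransvection.
Variables (VL VG : finType) (eL : rel VL) (eG : rel VG) (phi : VL -> VG) (v v' : VG).
Variable pr : VL -> VL.
Hypotheses (eL_sym : symmetric eL) (eG_irr : irreflexive eG).
Hypothesis phi_e : forall u w, eL u w -> eG (phi u) (phi w).
Hypothesis vv' : v != v'.
Hypothesis pr_lk : forall x, phi x = v -> phi (pr x) = v' /\ lk_sub_st eL x (pr x).
Local Notation req := (raag_eq eL).

Definition fiber_transvection (s : bool) (x : VL) : word VL :=
  if phi x == v then [:: (x, false); (pr x, s)] else [:: (x, false)].

Lemma fiber_transvection_on s x :
  phi x = v -> fiber_transvection s x = [:: (x, false); (pr x, s)].
Proof. by rewrite /fiber_transvection => ->; rewrite eqxx. Qed.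

Lemma fiber_transvection_off s x : phi x != v -> fiber_transvection s x = [:: (x, false)].
Proof. by rewrite /fiber_transvection => /negbTE ->. Qed.

Lemma fiber_transvection_commute s x y : eL x y -> phi x = v -> phi y != v ->
  req (fiber_transvection s x ++ fiber_transvection s y)
      (fiber_transvection s y ++ fiber_transvection s x).
Proof.
move=> exy px py; rewrite fiber_transvection_on // fiber_transvection_off //=.
have [_ /(_ y exy) y_st] := pr_lk px.
apply: raag_trans (raag_eq_catl [:: (x, false)] (raag_commute_letters s false y_st)) _.
exact: (raag_comm [::] [:: (pr x, s)] false false exy).
Qed.

Lemma fiber_transvection_hom s : raag_hom eL eL (fiber_transvection s).
Proof.
apply: raag_hom_of_edges => x y exy.
have [px|px] := eqVneq (phi x) v; have [py|py] := eqVneq (phi y) v.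
- by move: (phi_e exy); rewrite px py eG_irr.
- exact: fiber_transvection_commute.
- by apply: raag_sym; apply: fiber_transvection_commute; rewrite // eL_sym.
- rewrite !fiber_transvection_off //.
  exact: (raag_comm [::] [::] false false exy).
Qed.

Lemma fiber_transvectionK s x :
  req (subst (fiber_transvection s) (fiber_transvection (~~ s) x)) [:: (x, false)].
Proof.
have [px|px] := eqVneq (phi x) v; last first.
  by rewrite fiber_transvection_off // subst1 fiber_transvection_off //; apply: raag_refl.
have ppx : phi (pr x) != v by rewrite (proj1 (pr_lk px)) eq_sym.
rewrite fiber_transvection_on // subst_cons subst_seq1 /subst_letter /=.
rewrite fiber_transvection_on // fiber_transvection_off //.
by case: s; apply: (raag_cancel eL [:: (x, false)] [::] (pr x)).
Qed.

Lemma fiber_transvection_aut : raag_aut eL (fiber_transvection false).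
Proof.
apply: raag_aut_of_inverse (fiber_transvection_hom _) (fiber_transvection_hom true) _ _.
- exact: fiber_transvectionK false.
- exact: fiber_transvectionK true.
Qed.

Lemma fiber_transvection_lifts w :
  subst (transvection v v') (subst (induced_hom phi) w) =
  subst (induced_hom phi) (subst (fiber_transvection false) w).
Proof.
rewrite !subst_comp; apply: eq_subst => x /=.
rewrite /induced_hom subst1 /transvection.
have [px|px] := eqVneq (phi x) v.
- by rewrite fiber_transvection_on // /subst /= px (proj1 (pr_lk px)).
- by rewrite fiber_transvection_off // subst1.
Qed.

End FiberTransvection.

Lemma liftable_of_lesssim (VL VG : finType) (eL : rel VL) (eG : rel VG)
    (phi : VL -> VG) v v' :
  simple_graph eL -> irreflexive eG -> covering_map eL eG phi -> v != v' ->
  lesssim eL phi v v' -> liftable eL eG phi (transvection v v').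
Proof.
move=> [eL_sym _] eG_irr [_ phi_e _ _] vv' les.
have /fin_all_exists [pr pr_lk] :
    forall x, exists y, phi x = v -> phi y = v' /\ lk_sub_st eL x y.
  move=> x; have [/les [y]|px] := eqVneq (phi x) v; first by exists y.
  by exists x => /eqP; rewrite (negbTE px).
exists (fiber_transvection phi v pr false); split.
- exact: fiber_transvection_aut eL_sym eG_irr phi_e vv' pr_lk.
- by move=> w; rewrite (fiber_transvection_lifts pr_lk); apply: raag_refl.
Qed.

Theorem corollary8p4 (VL VG : finType) (eL : rel VL) (eG : rel VG)
    (phi : VL -> VG) :
  simple_graph eL -> simple_graph eG ->
  no_isolated eL -> no_isolated eG ->
  regular_covering eL eG phi ->
  forall v v' : VG, v <> v' -> lk_sub_st eG v v' ->
  (liftable eL eG phi (transvection v v') <-> lesssim eL phi v v').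
Proof.
move=> sL [_ eG_irr] _ _ reg v v' /eqP vv' _; split.
- exact: lesssim_of_liftable_transvection sL reg.
- exact: liftable_of_lesssim sL eG_irr reg.1 vv'.
Qed.
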